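(* Let $k$ be a field of characteristic zero and $a,b\in k^{*}$ such that the quadratic form $\langle 1,-a\rangle\langle 1,b\rangle$ is anisotropic over $k$. Let $\mathcal{L}$ be a finite extension of $k(T)$, and let $\mathfrak{T}$ be a prime of $\mathcal{L}$ above $T$ which is unramified over $k(T)$ and whose residue field is $k$. Let $g\in k(T)^{*}$ be such that $\operatorname{ord}_T(g)$ is non-negative and even. Then at least one of the two quadratic forms $$q_1=\langle T,-aT,-1,-g\rangle\langle 1,b\rangle,\qquad q_2=\langle T,-aT,-1,-ag\rangle\langle 1,b\rangle$$ is anisotropic over $\mathcal{L}$.
   Context: $\langle c_1,\dots,c_n\rangle$ denotes the diagonal quadratic form $c_1x_1^2+\dots+c_nx_n^2$, and the product $\langle c_1,\dots,c_n\rangle\langle d_1,\dots,d_m\rangle$ denotes the tensor product form $\langle c_id_j\rangle_{i,j}$. A form is isotropic over a field if it has a nontrivial zero there, and anisotropic otherwise. A prime above $T$ is a place of $\mathcal{L}$ over the zero of $T$ in $k(T)$; $\operatorname{ord}_T$ is the normalized valuation of $k(T)$ at $T$. *)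

From HB Require Import structures.
From mathcomp Require Import all_boot all_order all_algebra all_field.
Set Implicit Arguments. Unset Strict Implicit. Unset Printing Implicit Defensive.
Import Order.TTheory GRing.Theory Num.Theory.
Local Open Scope ring_scope.

Notation ratfun k := {fraction {poly k}}.
Definition rf {k : fieldType} (p : {poly k}) : ratfun k := FracField.tofrac p.
Definition rfT (k : fieldType) : ratfun k := rf 'X.
Definition rfC {k : fieldType} (c : k) : ratfun k := rf c%:P.

Definition ordT_is {k : fieldType} (g : ratfun k) (n : int) : Prop :=
  exists p q : {poly k}, [/\ p.[0] != 0, q.[0] != 0 &
     g = rf p / rf q * (rfT k) ^ n].

(* Diagonal quadratic forms <c_1,...,c_n> as sequences of coefficients. *)
Definition qf_tensor {F : fieldType} (s t : seq F) : seq F :=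
  [seq c * d | c <- s, d <- t].

Definition isotropic {F : fieldType} (s : seq F) : Prop :=
  exists x : 'I_(size s) -> F,
    (exists i, x i != 0) /\ \sum_(i < size s) s`_i * x i ^+ 2 = 0.

Definition anisotropic {F : fieldType} (s : seq F) : Prop := ~ isotropic s.

(* A normalized discrete valuation on a field L (values on L^*, w 0 irrelevant). *)
Definition discrete_valuation {L : fieldType} (w : L -> int) : Prop :=
  [/\ forall x y, x != 0 -> y != 0 -> w (x * y) = w x + w y,
      forall x y, x != 0 -> y != 0 -> x + y != 0 ->
        Order.min (w x) (w y) <= w (x + y)
    & exists x, x != 0 /\ w x = 1].

(* A prime of L above T, unramified over k(T): w restricts to ord_T on k(T)
   (ramification index 1). *)
Definition unramified_prime_above_T {k : fieldType}
    {L : fieldExtType (ratfun k)} (w : L -> int) : Prop :=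
  discrete_valuation w /\
  forall (g : ratfun k) (n : int), g != 0 -> ordT_is g n -> w (g%:A) = n.

(* The residue field of w is k: every w-integral element is congruent to
   (the image of) a constant of k modulo the maximal ideal. *)
Definition residue_field_is_k {k : fieldType}
    {L : fieldExtType (ratfun k)} (w : L -> int) : Prop :=
  forall x : L, x != 0 -> 0 <= w x ->
    exists c : k, x = (rfC c)%:A \/ (x - (rfC c)%:A != 0 /\ 0 < w (x - (rfC c)%:A)).

(* Springer's theorem: if a form <u_1, ..., u_r> _|_ T <v_1, ..., v_s> with unit
   coefficients is isotropic over a discretely valued field with uniformizer T,
   then so is one of the residue forms <u_i mod T>, <v_j mod T>.  Write
   g = h T^(2m) with h = c mod T, c = p(0) / q(0) != 0.  The residue forms of q1
   are <1, -a><1, b>, anisotropic by hypothesis, and -<1, c><1, b>; those of q2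
   are the same with c replaced by a c.  If both q1 and q2 were isotropic, -c and
   -a c would both be quotients of values of x^2 + b y^2, hence so would be a,
   i.e. <1, -a><1, b> would be isotropic.  Neither the characteristic nor
   a, b, g != 0 play a role. *)

From HB Require Import structures.
From mathcomp Require Import all_boot all_order all_algebra all_field.
From mathcomp Require Import zify ring.
From Stdlib Require Import Classical.
Import Order.TTheory GRing.Theory Num.Theory.
Set Implicit Arguments.
Unset Strict Implicit.
Unset Printing Implicit Defensive.

Local Open Scope ring_scope.

Section DiagonalForms.
Variable F : fieldType.

(* [isotropic s] is convertible to [isotropic_fun (fun i : 'I_(size s) => s`_i)]. *)
Definition isotropic_fun n (q : 'I_n -> F) :=
  exists x : 'I_n -> F, (exists i, x i != 0) /\ \sum_i q i * x i ^+ 2 = 0.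

Lemma eq_isotropic_fun n (q q' : 'I_n -> F) :
  q =1 q' -> isotropic_fun q -> isotropic_fun q'.
Proof.
move=> qq' [x [x0 xsum]]; exists x; split=> //.
by rewrite -[RHS]xsum; apply: eq_bigr => i _; rewrite qq'.
Qed.

Lemma isotropic_funN n (q : 'I_n -> F) :
  isotropic_fun (fun i => - q i) -> isotropic_fun q.
Proof.
move=> [x [x0 xsum]]; exists x; split=> //.
apply/eqP; rewrite -oppr_eq0 -sumrN; apply/eqP; rewrite -[RHS]xsum.
by apply: eq_bigr => i _; rewrite mulNr.
Qed.

Lemma isotropic_fun_scale n (q s : 'I_n -> F) : (forall i, s i != 0) ->
  isotropic_fun (fun i => q i * s i ^+ 2) -> isotropic_fun q.
Proof.
move=> s0 [x [[i xi] xsum]]; exists (fun i => s i * x i); split.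
  by exists i; rewrite mulf_neq0.
by rewrite -[RHS]xsum; apply: eq_bigr => j _; rewrite exprMn mulrA.
Qed.

End DiagonalForms.

Section BinaryNormForm.
Variables (F : fieldType) (b : F).

(* The binary form <1, b>, i.e. the norm form of F(sqrt (- b)). *)
Definition qnorm (x y : F) : F := x ^+ 2 + b * y ^+ 2.

Lemma qnormM x y z t :
  qnorm x y * qnorm z t = qnorm (x * z - b * y * t) (x * t + y * z).
Proof. by rewrite /qnorm; ring. Qed.

Lemma qnorm00 : qnorm 0 0 = 0.
Proof. by rewrite /qnorm expr0n mulr0 addr0. Qed.

Lemma isotropic_tensor2P (c : F) :
  isotropic (qf_tensor [:: 1; c] [:: 1; b]) <->
  exists x y z t : F,
    [|| x != 0, y != 0, z != 0 | t != 0] /\ qnorm x y + c * qnorm z t = 0.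
Proof.
split=> [[x [[i xi] xsum]] | [x [y [z [t [nz xsum]]]]]].
  have xE (j : 'I_4) : x j = x (inord j) by rewrite inord_val.
  exists (x (inord 0)), (x (inord 1)), (x (inord 2)), (x (inord 3)); split.
    move: xi; rewrite [x i]xE.
    by case: i => [[|[|[|[|//]]]] ?]; rewrite [nat_of_ord _]/= => ->; rewrite ?orbT.
  apply: etrans xsum; under [RHS]eq_bigr => j _ do rewrite xE.
  by rewrite !big_ord_recl big_ord0 /qnorm /=; ring.
exists (fun i : 'I_4 => [:: x; y; z; t]`_i); split.
  by case/or4P: nz => nz;
    [exists ord0 | exists (inord 1) | exists (inord 2) | exists (inord 3)];
    rewrite ?inordK.
apply: etrans xsum.
by rewrite !big_ord_recl big_ord0 /qnorm /=; ring.
Qed.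

Lemma anisotropic_qnorm (a : F) :
  anisotropic (qf_tensor [:: 1; - a] [:: 1; b]) ->
  forall x y z t, qnorm x y = a * qnorm z t -> [/\ x = 0, y = 0, z = 0 & t = 0].
Proof.
move=> hanis x y z t xyzt.
have : ~~ [|| x != 0, y != 0, z != 0 | t != 0].
  apply/negP => nz; apply: hanis; apply/isotropic_tensor2P.
  by exists x, y, z, t; split; rewrite // xyzt mulNr subrr.
by rewrite !negb_or !negbK => /and4P[/eqP-> /eqP-> /eqP-> /eqP->].
Qed.

Lemma anisotropic_tensor2_mul (a c : F) : c != 0 ->
  anisotropic (qf_tensor [:: 1; - a] [:: 1; b]) ->
  isotropic (qf_tensor [:: 1; c] [:: 1; b]) ->
  anisotropic (qf_tensor [:: 1; a * c] [:: 1; b]).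
Proof.
move=> c0 hanis /isotropic_tensor2P[e1 [e2 [e3 [e4 [ne E]]]]].
move=> /isotropic_tensor2P[f1 [f2 [f3 [f4 [nf Fe]]]]].
have qnorm_eq0 x y : qnorm x y = 0 -> x = 0 /\ y = 0.
  move=> xy0; have := anisotropic_qnorm hanis (x := x) (y := y) (z := 0) (t := 0).
  by rewrite xy0 qnorm00 mulr0 => /(_ erefl)[-> ->].
have Ne : qnorm e1 e2 = - c * qnorm e3 e4 by rewrite -[LHS]subr0 -E; ring.
have Nf : qnorm f1 f2 = - (a * c) * qnorm f3 f4 by rewrite -[LHS]subr0 -Fe; ring.
have Ne34 : qnorm e3 e4 != 0.
  apply/eqP => /qnorm_eq0[e30 e40]; move: Ne; rewrite e30 e40 qnorm00 mulr0.
  by move/qnorm_eq0 => [e10 e20]; move: ne; rewrite e10 e20 e30 e40 eqxx.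
have Nf34 : qnorm f3 f4 != 0.
  apply/eqP => /qnorm_eq0[f30 f40]; move: Nf; rewrite f30 f40 qnorm00 mulr0.
  by move/qnorm_eq0 => [f10 f20]; move: nf; rewrite f10 f20 f30 f40 eqxx.
(* [a] is a quotient of two values of [qnorm]: [a = (-ac) / (-c)]. *)
have := qnormM f1 f2 e3 e4; have := qnormM f3 f4 e1 e2.
set Q1 := _ * _ - _; set Q2 := _ + _; set P1 := _ * _ - _; set P2 := _ + _ => NQ NP.
have PQ : qnorm P1 P2 = a * qnorm Q1 Q2 by rewrite -NP -NQ Nf Ne; ring.
have [_ _ Q10 Q20] := anisotropic_qnorm hanis PQ.
move: NQ; rewrite Q10 Q20 qnorm00 Ne => /eqP.
by rewrite !mulf_eq0 oppr_eq0 (negbTE c0) (negbTE Nf34) (negbTE Ne34).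
Qed.

End BinaryNormForm.

Section DiscreteValuation.
Variables (L : fieldType) (w : L -> int).
Hypothesis hw : discrete_valuation w.

(* [vball w z] is the fractional ideal of elements of valuation at least [z];
   [vball w 0] is the valuation ring and [vball w 1] its maximal ideal. *)
Definition vball (z : int) : pred L := fun y => (y == 0) || (z <= w y).

Lemma vballE z y : (y \in vball z) = (y == 0) || (z <= w y).
Proof. by []. Qed.

Lemma valM x y : x != 0 -> y != 0 -> w (x * y) = w x + w y.
Proof. by case: hw => valM _ _; apply: valM. Qed.

Lemma val1 : w 1 = 0.
Proof. by apply: (addrI (w 1)); rewrite -valM ?oner_neq0 // mulr1 addr0. Qed.

Lemma valN x : w (- x) = w x.
Proof.
have [->|x0] := eqVneq x 0; first by rewrite oppr0.
have N10 : - 1 != 0 :> L by rewrite oppr_eq0 oner_neq0.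
have valN1 : w (- 1) = 0.
  by have := valM N10 N10; rewrite mulrNN mulr1 val1; set v := w _ => h; lia.
by rewrite -mulN1r valM // valN1 add0r.
Qed.

Lemma valV x : x != 0 -> w x^-1 = - w x.
Proof.
by move=> x0; apply: (addrI (w x)); rewrite -valM ?invr_eq0 // mulfV // val1 subrr.
Qed.

Lemma vball0 z : 0 \in vball z.
Proof. by rewrite vballE eqxx. Qed.

Lemma vballN z y : (- y \in vball z) = (y \in vball z).
Proof. by rewrite !vballE oppr_eq0 valN. Qed.

Lemma vballD z x y : x \in vball z -> y \in vball z -> x + y \in vball z.
Proof.
have [->|x0] := eqVneq x 0; first by rewrite add0r.
have [->|y0] := eqVneq y 0; first by rewrite addr0.
rewrite !vballE (negbTE x0) (negbTE y0) /= => zx zy.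
have [//|xy0 /=] := eqVneq (x + y) 0.
case: hw => _ val_min _; apply: le_trans (val_min _ _ x0 y0 xy0).
by rewrite le_min zx zy.
Qed.

Lemma vballB z x y : x \in vball z -> y \in vball z -> x - y \in vball z.
Proof. by move=> xz yz; rewrite vballD ?vballN. Qed.

Lemma vball_sum z (I : finType) (P : pred I) (F : I -> L) :
  (forall i, P i -> F i \in vball z) -> \sum_(i | P i) F i \in vball z.
Proof.
by move=> FP; apply: (big_ind (fun y => y \in vball z)); [apply: vball0 | apply: vballD |].
Qed.

Lemma vballM m n x y : x \in vball m -> y \in vball n -> x * y \in vball (m + n).
Proof.
rewrite !vballE mulf_eq0; have [//|x0] := eqVneq x 0; have [//|y0] := eqVneq y 0.
by rewrite /= valM // => mx ny; apply: lerD.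
Qed.

Lemma vmax_vring : {subset vball 1 <= vball 0}.
Proof. by move=> y; rewrite !vballE => /orP[->//|h]; rewrite (le_trans _ h) ?orbT. Qed.

Lemma vmaxM x y : x \in vball 0 -> y \in vball 1 -> x * y \in vball 1.
Proof. by move=> x0 y1; have := vballM x0 y1; rewrite add0r. Qed.

Lemma unit_vmax y : y != 0 -> w y = 0 -> y \notin vball 1.
Proof. by move=> y0 wy; rewrite vballE (negbTE y0) wy. Qed.

Section Springer.
Variables (K : fieldType) (iota : {rmorphism K -> L}) (pi : L).
Hypotheses (pi_neq0 : pi != 0) (val_pi : w pi = 1).
Hypothesis val_iota : forall c, c != 0 -> w (iota c) = 0.
Hypothesis residue_surj : forall y, y \in vball 0 -> exists c, y - iota c \in vball 1.

Lemma iota_vring c : iota c \in vball 0.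
Proof. by rewrite vballE fmorph_eq0; case: eqVneq => // /val_iota->. Qed.

Lemma iota_vmax c : (iota c \in vball 1) = (c == 0).
Proof.
have [->|c0] := eqVneq c 0; first by rewrite rmorph0 vball0.
by apply/negbTE/unit_vmax; rewrite ?fmorph_eq0 ?val_iota.
Qed.

Lemma residueM y z c d : y - iota c \in vball 1 -> z - iota d \in vball 1 ->
  y * z - iota (c * d) \in vball 1.
Proof.
move=> yc zd; have -> : y * z - iota (c * d) =
    (y - iota c) * (z - iota d) + iota d * (y - iota c) + iota c * (z - iota d).
  by rewrite rmorphM; ring.
by rewrite !vballD ?vmaxM ?iota_vring ?vmax_vring.
Qed.

Lemma val_pi_exp (b : bool) : w (pi ^+ b) = b.
Proof. by case: b; rewrite ?expr1 ?expr0 ?val_pi ?val1. Qed.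

Lemma twisted_term_vmax (e f : bool) u z : e != f -> u \in vball 0 ->
  (z == 0) || (Posz f <= Posz e + 2 * w z) -> pi ^+ e * u * z ^+ 2 / pi ^+ f \in vball 1.
Proof.
move=> ef; rewrite !vballE; have [->|z0] := eqVneq z 0.
  by rewrite expr0n /= mulr0 mul0r eqxx.
have [->|u0] := eqVneq u 0; first by rewrite mulr0 !mul0r eqxx.
rewrite /= => wu fz; apply/orP; right.
rewrite valM ?mulf_neq0 ?invr_eq0 ?expf_neq0 // valV ?expf_neq0 //.
rewrite !valM ?mulf_neq0 ?expf_neq0 // !val_pi_exp.
(* [e + 2 w z] and [f] have different parities, so the inequality is strict. *)
have gap : 1 <= Posz e - Posz f + 2 * w z.
  by move: ef fz; case: e; case: f => //= _; set v := w z; lia.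
by move: gap wu; set v := w z; set v' := w u; set e' := Posz e; set f' := Posz f; lia.
Qed.

(* Rescale a zero [x] so that its entry of least weight [eps i + 2 w (x i)]
   becomes [1], and divide the form by the power of [pi] in front of it. *)
Lemma springer_normalize n (eps : 'I_n -> bool) (u x : 'I_n -> L) :
  (forall i, u i \in vball 0) -> (exists i, x i != 0) ->
  \sum_i pi ^+ eps i * u i * x i ^+ 2 = 0 ->
  exists p (y : 'I_n -> L), [/\ exists2 i, eps i == p & y i \notin vball 1,
    forall i, eps i == p -> y i \in vball 0
  & \sum_(i | eps i == p) u i * y i ^+ 2 \in vball 1].
Proof.
move=> u_int [i0 xi0] xsum.
pose weight i : int := Posz (eps i) + 2 * w (x i).
have [im xim im_min] := arg_minP weight (P := fun i => x i != 0) xi0.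
set p := eps im; pose y i := x i / x im.
have y_weight i : (y i == 0) || (Posz p <= Posz (eps i) + 2 * w (y i)).
  have [xi_eq0|xi0'] := eqVneq (x i) 0; first by rewrite /y xi_eq0 mul0r eqxx.
  rewrite mulf_eq0 invr_eq0 (negbTE xi0') (negbTE xim) /= valM ?invr_eq0 // valV //.
  move: (im_min i xi0'); rewrite /weight -/p.
  by set e := Posz (eps i); set f := Posz p; set v := w (x i); set v' := w (x im); lia.
pose t i := pi ^+ eps i * u i * y i ^+ 2 / pi ^+ p.
have tsum : \sum_i t i = 0.
  have tE i : t i = pi ^+ eps i * u i * x i ^+ 2 * (x im ^+ 2 * pi ^+ p)^-1.
    by rewrite /t /y; field; rewrite expf_neq0 ?xim.
  by rewrite (eq_bigr _ (fun i _ => tE i)) -mulr_suml xsum mul0r.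
exists p, y; split.
- by exists im; rewrite // /y divff // unit_vmax ?oner_neq0 ?val1.
- move=> i /eqP epsi; move: (y_weight i); rewrite vballE epsi.
  by case/orP=> [->//|]; set v := w (y i); set f := Posz p; move=> h; apply/orP; right; lia.
have <- : \sum_(i | eps i == p) t i = \sum_(i | eps i == p) u i * y i ^+ 2.
  by apply: eq_bigr => i /eqP epsi; rewrite /t epsi; field; rewrite expf_neq0.
move/eqP: tsum; rewrite (bigID (fun i => eps i == p)) /= addr_eq0 => /eqP->.
by rewrite vballN vball_sum // => i epsi; apply: twisted_term_vmax epsi (u_int i) (y_weight i).
Qed.

Lemma springer_reduce n (P : pred 'I_n) (u y : 'I_n -> L) (c : 'I_n -> K) :
  (forall i, P i -> u i - iota (c i) \in vball 1) ->
  (forall i, P i -> y i \in vball 0) -> (exists2 i, P i & y i \notin vball 1) ->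
  \sum_(i | P i) u i * y i ^+ 2 \in vball 1 ->
  exists e, [/\ exists i, e i != 0, forall i, ~~ P i -> e i = 0
          & \sum_i c i * e i ^+ 2 = 0].
Proof.
move=> uc y_int [i0 Pi0 yi0] usum.
have residues i : exists c, if P i then y i - iota c \in vball 1 else c == 0.
  by case Pi: (P i); [apply: residue_surj; apply: y_int | exists 0].
have [e he] := fin_all_exists residues.
exists e; split.
- exists i0; apply: contraNneq yi0 => ei0.
  by have := he i0; rewrite Pi0 ei0 rmorph0 subr0.
- by move=> i /negbTE Pi; have := he i; rewrite Pi => /eqP.
apply/eqP; rewrite -iota_vmax rmorph_sum big_mkcond /=.
rewrite (eq_bigr (fun i => if P i then iota (c i * e i ^+ 2) else 0)); last first.
  by move=> i _; case: ifP (he i) => // _ /eqP->; rewrite expr0n mulr0 rmorph0.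
rewrite -big_mkcond -[X in X \in _](subKr (\sum_(i | P i) u i * y i ^+ 2)).
rewrite -sumrB vballB // vball_sum // => i Pi.
by rewrite residueM ?uc // !expr2 residueM //; have := he i; rewrite Pi.
Qed.

Theorem springer n (eps : 'I_n -> bool) (u : 'I_n -> L) (c : 'I_n -> K) :
  (forall i, u i - iota (c i) \in vball 1) ->
  isotropic_fun (fun i => pi ^+ eps i * u i) ->
  exists p e, [/\ exists i, e i != 0, forall i, eps i != p -> e i = 0
            & \sum_i c i * e i ^+ 2 = 0].
Proof.
move=> uc [x [xi0 xsum]].
have u_int i : u i \in vball 0.
  by rewrite -(subrK (iota (c i)) (u i)) vballD ?iota_vring ?vmax_vring.
have [p [y [y_unit y_int ysum]]] := springer_normalize u_int xi0 xsum.
by exists p; apply: (springer_reduce (fun i _ => uc i) y_int y_unit ysum).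
Qed.

Corollary springer_blocks n1 n2 (u : 'I_(n1 + n2) -> L) (c : 'I_(n1 + n2) -> K) :
  (forall i, u i - iota (c i) \in vball 1) ->
  isotropic_fun (fun i : 'I_(n1 + n2) => pi ^+ (i < n1)%N * u i) ->
  isotropic_fun (fun j => c (lshift n2 j)) \/ isotropic_fun (fun j => c (rshift n1 j)).
Proof.
move=> uc /(springer uc)[p [e [[i ei] e_supp]]].
have in_l (j : 'I_n1) : (lshift n2 j < n1)%N := ltn_ord j.
have in_r (j : 'I_n2) : (rshift n1 j < n1)%N = false by rewrite /= ltnNge leq_addr.
move: ei; rewrite -(splitK i) big_split_ord /=; case: p e_supp => e_supp.
- rewrite [X in _ + X]big1 ?addr0 => [ei esum|j _]; last first.
    by rewrite e_supp ?in_r ?expr0n ?mulr0.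
  left; exists (fun j => e (lshift n2 j)); split => //.
  by case: (split i) ei => j /= ej; [exists j | rewrite e_supp ?in_r ?eqxx in ej].
rewrite [X in X + _]big1 ?add0r => [ei esum|j _]; last first.
  by rewrite e_supp ?in_l ?expr0n ?mulr0.
right; exists (fun j => e (rshift n1 j)); split => //.
by case: (split i) ei => j /= ej; [rewrite e_supp ?in_l ?eqxx in ej | exists j].
Qed.

Lemma isotropic_residue_tensor (a b c : K) (h : L) (m : nat) :
  h - iota c \in vball 1 ->
  anisotropic (qf_tensor [:: 1; - a] [:: 1; b]) ->
  isotropic (qf_tensor [:: pi; - (iota a * pi); -1; - (h * pi ^+ (2 * m))]
                       [:: 1; iota b]) ->
  isotropic (qf_tensor [:: 1; c] [:: 1; b]).
Proof.
rewrite mulnC exprM => hc hanis iso.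
pose u (i : 'I_(4 + 4)) :=
  [:: 1; iota b; - iota a; - iota a * iota b; -1; - iota b; - h; - h * iota b]`_i.
pose d (i : 'I_(4 + 4)) :=
  (qf_tensor [:: 1; - a] [:: 1; b] ++ map -%R (qf_tensor [:: 1; c] [:: 1; b]))`_i.
have ud i : u i - iota (d i) \in vball 1.
  have hc' : - h + iota c \in vball 1 by rewrite addrC -opprB vballN.
  case: i => [[|[|[|[|[|[|[|[|//]]]]]]]] ?]; rewrite /u /d /= ?mulr1 ?mul1r.
  all: rewrite ?rmorphN ?rmorphM ?rmorph1 ?rmorphN ?subrr ?vball0 ?opprK //.
  by rewrite -mulrDl mulrC vmaxM ?iota_vring.
have d_lshift (j : 'I_4) : d (lshift 4 j) = (qf_tensor [:: 1; - a] [:: 1; b])`_j.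
  by rewrite /d nth_cat (ltn_ord j).
have d_rshift (j : 'I_4) : d (rshift 4 j) = - (qf_tensor [:: 1; c] [:: 1; b])`_j.
  by rewrite /d nth_cat ltnNge leq_addr addKn (nth_map 0) // (ltn_ord j).
have : isotropic_fun (fun i : 'I_(4 + 4) => pi ^+ (i < 4)%N * u i).
  pose s (i : 'I_(4 + 4)) := if (i < 6)%N then 1 else pi ^+ m.
  apply: (@isotropic_fun_scale _ _ _ s).
    by move=> i; rewrite /s; case: ifP; rewrite ?oner_neq0 ?expf_neq0.
  apply: eq_isotropic_fun iso.
  by case=> [[|[|[|[|[|[|[|[|//]]]]]]]] ?]; rewrite /u /s /=; ring.
case/(springer_blocks ud) => [/(eq_isotropic_fun d_lshift)/hanis[] |].
by move/(eq_isotropic_fun d_rshift)/isotropic_funN.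
Qed.

End Springer.

End DiscreteValuation.

Section RationalFunctionField.
Variable k : fieldType.

Lemma rfT_neq0 : rfT k != 0.
Proof. by rewrite /rfT /rf tofrac_eq0 polyX_eq0. Qed.

Lemma ordT_isC (c : k) : c != 0 -> ordT_is (rfC c) 0.
Proof.
by move=> c0; exists c%:P, 1; rewrite !hornerC oner_neq0 c0 /rf tofrac1 divr1 expr0z mulr1.
Qed.

Lemma ordT_isT : ordT_is (rfT k) 1.
Proof. by exists 1, 1; rewrite hornerC oner_neq0 /rf tofrac1 divr1 mul1r expr1z. Qed.

Lemma ordT_is_sub_value (p q : {poly k}) : p.[0] != 0 -> q.[0] != 0 ->
  rf p / rf q != rfC (p.[0] / q.[0]) ->
  exists2 n : nat, (0 < n)%N & ordT_is (rf p / rf q - rfC (p.[0] / q.[0])) n.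
Proof.
move=> p0 q0; set c := p.[0] / q.[0]; rewrite -subr_eq0 => r0.
have q_neq0 : q != 0 by apply: contraNneq q0 => ->; rewrite horner0.
pose s := p - q * c%:P.
have s0 : s.[0] = 0 by rewrite /s hornerD hornerN hornerM hornerC /c mulrC divfK ?subrr.
have rE : rf p / rf q - rfC c = rf s / rf q.
  have rq0 : rf q != 0 by rewrite /rf tofrac_eq0.
  by rewrite /s /rfC /rf tofracB tofracM mulrBl mulrAC (divff rq0) mul1r.
have [n [s' s'0 sE]] := multiplicity_XsubC s 0.
have s_neq0 : s != 0 by apply: contraNneq r0 => s_eq0; rewrite rE s_eq0 /rf tofrac0 mul0r.
rewrite s_neq0 /= in s'0.
have n_gt0 : (0 < n)%N.
  case: n sE => // sE; move: s0; rewrite sE expr0 mulr1 => s'r.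
  by rewrite /root s'r eqxx in s'0.
exists n => //; exists s', q; split => //.
by rewrite rE sE /rf tofracM subr0 tofracXn mulrAC.
Qed.

End RationalFunctionField.

Section PrimeAboveT.
Variables (k : fieldType) (L : fieldExtType (ratfun k)) (w : L -> int).
Hypotheses (hw : unramified_prime_above_T w) (hres : residue_field_is_k w).

Definition in_const : {rmorphism k -> L} := in_alg L \o @FracField.tofrac _ \o polyC.

Lemma val_in_const c : c != 0 -> w (in_const c) = 0.
Proof.
move=> c0; case: hw => _ /(_ (rfC c) 0); apply; last exact: ordT_isC.
by rewrite /rfC /rf tofrac_eq0 polyC_eq0.
Qed.

Lemma val_T : w (rfT k)%:A = 1.
Proof. by case: hw => _ /(_ _ _ (rfT_neq0 k) (ordT_isT k)). Qed.

Lemma T_neq0 : (rfT k)%:A != 0 :> L.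
Proof. by rewrite -in_algE fmorph_eq0 rfT_neq0. Qed.

Lemma residue_in_const y : y \in vball w 0 -> exists c, y - in_const c \in vball w 1.
Proof.
rewrite vballE; have [->|y0] := eqVneq y 0; first by exists 0; rewrite rmorph0 subr0 vball0.
move=> /= wy; have [c [yc|[yc0 wyc]]] := @hres y y0 wy; exists c.
  by rewrite yc subrr vball0.
by rewrite vballE -gtz0_ge1 wyc orbT.
Qed.

Lemma vmax_sub_value (p q : {poly k}) : p.[0] != 0 -> q.[0] != 0 ->
  (rf p / rf q)%:A - in_const (p.[0] / q.[0]) \in vball w 1.
Proof.
move=> p0 q0; have [r0|r0] := eqVneq (rf p / rf q) (rfC (p.[0] / q.[0])).
  by rewrite r0 subrr vball0.
have [n n_gt0 r_ord] := ordT_is_sub_value p0 q0 r0.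
have -> : (rf p / rf q)%:A - in_const (p.[0] / q.[0]) = (rf p / rf q - rfC (p.[0] / q.[0]))%:A.
  by rewrite -!in_algE rmorphB.
by case: hw => _ hun; rewrite vballE (hun _ n) ?subr_eq0 // lez_nat n_gt0 orbT.
Qed.

End PrimeAboveT.

Theorem lemma6p1 (k : fieldType) (a b : k)
  (hchar : [pchar k] =i pred0)
  (ha : a != 0) (hb : b != 0)
  (hanis : anisotropic (qf_tensor [:: 1; - a] [:: 1; b]))
  (L : fieldExtType (ratfun k)) (w : L -> int)
  (hw : unramified_prime_above_T w) (hres : residue_field_is_k w)
  (g : ratfun k) (hg : g != 0) (hord : exists m : nat, ordT_is g (2 * m)%:Z) :
  let iL := fun c : ratfun k => (c%:A : L) in
  let T := iL (rfT k) in
  let a' := iL (rfC a) in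
  let b' := iL (rfC b) in
  let g' := iL g in
  anisotropic (qf_tensor [:: T; - (a' * T); -1; - g'] [:: 1; b']) \/
  anisotropic (qf_tensor [:: T; - (a' * T); -1; - (a' * g')] [:: 1; b']).
Proof.
move=> iL T a' b' g'.
have [m [p [q [p0 q0 gE]]]] := hord.
pose h : L := (rf p / rf q)%:A.
have g'E : g' = h * T ^+ (2 * m) by rewrite /g' /iL gE -!in_algE rmorphM rmorphXn.
have [hv _] := hw.
have residue_tensor := isotropic_residue_tensor hv (T_neq0 L) (val_T hw)
  (val_in_const hw) (residue_in_const hres).
set c := p.[0] / q.[0].
have c0 : c != 0 by rewrite mulf_neq0 ?invr_eq0.
have hc : h - in_const L c \in vball w 1 := vmax_sub_value hw p0 q0.
have hac : in_const L a * h - in_const L (a * c) \in vball w 1.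
  by rewrite rmorphM -mulrBr vmaxM ?(iota_vring (val_in_const hw)).
have [iso1|] := classic (isotropic (qf_tensor [:: T; - (a' * T); -1; - g'] [:: 1; b']));
  last by left.
rewrite g'E in iso1; right => iso2.
apply: (anisotropic_tensor2_mul c0 hanis (residue_tensor _ _ _ _ _ hc hanis iso1)).
by rewrite g'E mulrA in iso2; apply: residue_tensor _ _ _ _ _ hac hanis iso2.
Qed.
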